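(* There is a constant $a_0>0$, depending only on $d$, $\Lambda$ and $\gamma$, such that for every domain $\Omega\subset\mathbb{R}^d$, every $u\in\mathcal{S}^F(\Omega)$, every $x_0\in\mathbb{R}^d$ and every $a\ge a_0$, $$L_u\big(au-|x-x_0|^\beta\big)\ge 0\qquad\text{in }\{u>0\}\cap\Omega,$$ where $\beta=\frac{2}{2-\gamma}$.
   Context: Fix $d\ge1$, $\Lambda\ge1$, $\gamma\in(1,2)$. $\mathcal{S}_d$ is the space of real symmetric $d\times d$ matrices. Standing assumptions on $F:\mathcal{S}_d\to\mathbb{R}$: (i) uniform ellipticity: $\frac1\Lambda\|P\|\le F(M+P)-F(M)\le\Lambda\|P\|$ for all $M,P\in\mathcal{S}_d$, $P\ge0$; (ii) $F$ is convex, $F(0)=0$, and the trace map is a sub-differential of $F$ at $0$; (iii) either $F$ is (Gâteaux) differentiable at $0$, or $F(\lambda M)=\lambda F(M)$ for all $\lambda>0$, $M\in\mathcal{S}_d$. A sub-differential of $F$ at $A$ is a linear map $S_A:\mathcal{S}_d\to\mathbb{R}$ with $S_A(M)\le F(A+M)-F(A)$ for all $M$. $\mathcal{S}^F(\Omega)$ is the class of continuous (viscosity, hence classical) solutions of $F(D^2u)=u^{\gamma-1}$, $u\ge0$ in $\Omega$. The linearized operator is $L_u(w)=S_{D^2u}(D^2w)-(\gamma-1)u^{\gamma-2}w$ in $\{u>0\}\cap\Omega$, where at each point $x$, $S_{D^2u}$ is a sub-differential of $F$ at $D^2u(x)$. *)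

From HB Require Import structures.
From mathcomp Require Import all_boot all_order all_algebra.
From mathcomp Require Import all_classical all_reals all_analysis.
Set Implicit Arguments. Unset Strict Implicit. Unset Printing Implicit Defensive.
Import Order.TTheory GRing.Theory Num.Theory.
Import numFieldNormedType.Exports.
Local Open Scope classical_set_scope.
Local Open Scope ring_scope.

Section Defs.
Variables (R : realType) (d : nat).

Definition symm (M : 'M[R]_d) : Prop := M^T = M.
Definition psd (P : 'M[R]_d) : Prop :=
  symm P /\ forall v : 'rV[R]_d, 0 <= (v *m P *m v^T) 0 0.

Definition enorm (v : 'rV[R]_d) : R := Num.sqrt (\sum_(i < d) (v 0 i) ^+ 2).

Definition opnorm (P : 'M[R]_d) : R :=
  sup [set enorm (v *m P) | v in [set v : 'rV[R]_d | enorm v <= 1]].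

(* linear maps S_d -> R (only their values on S_d matter) *)
Definition linear_on_sym (S : 'M[R]_d -> R) : Prop :=
  forall (c : R) (M N : 'M[R]_d), symm M -> symm N ->
    S (c *: M + N) = c * S M + S N.

Definition subdifferential (F S : 'M[R]_d -> R) (A : 'M[R]_d) : Prop :=
  linear_on_sym S /\ forall M, symm M -> S M <= F (A + M) - F A.

Definition unif_elliptic (Lam : R) (F : 'M[R]_d -> R) : Prop :=
  forall M P, symm M -> psd P ->
    opnorm P / Lam <= F (M + P) - F M /\ F (M + P) - F M <= Lam * opnorm P.

Definition convex_on_sym (F : 'M[R]_d -> R) : Prop :=
  forall (t : R) M N, symm M -> symm N -> 0 <= t <= 1 ->
    F (t *: M + (1 - t) *: N) <= t * F M + (1 - t) * F N.

Definition gateaux_diff_at0 (F : 'M[R]_d -> R) : Prop :=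
  (forall M, symm M -> derivable (fun t : R => F (t *: M)) 0 1) /\
  linear_on_sym (fun M => 'D_1 (fun t : R => F (t *: M)) 0).

Definition pos_homogeneous (F : 'M[R]_d -> R) : Prop :=
  forall (l : R) M, symm M -> 0 < l -> F (l *: M) = l * F M.

Definition standing_assumptions (Lam : R) (F : 'M[R]_d -> R) : Prop :=
  [/\ unif_elliptic Lam F,
      convex_on_sym F /\ F 0 = 0 /\ subdifferential F (fun M => \tr M) 0
    & gateaux_diff_at0 F \/ pos_homogeneous F].

Definition evec (i : 'I_d) : 'rV[R]_d := delta_mx 0 i.

Definition hess (u : 'rV[R]_d -> R) (x : 'rV[R]_d) : 'M[R]_d :=
  \matrix_(i, j) 'D_(evec j) ('D_(evec i) u) x.

Definition C2_on (Om : set 'rV[R]_d) (u : 'rV[R]_d -> R) : Prop :=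
  forall x, Om x ->
    differentiable u x /\
    (forall i, differentiable ('D_(evec i) u) x) /\
    (forall i j, {for x, continuous ('D_(evec j) ('D_(evec i) u))}).

Definition SF (gam : R) (F : 'M[R]_d -> R) (Om : set 'rV[R]_d)
    (u : 'rV[R]_d -> R) : Prop :=
  C2_on Om u /\
  forall x, Om x -> 0 <= u x /\ F (hess u x) = u x `^ (gam - 1).

(* the linearized operator at x, with sub-differential S of F at D^2u(x) *)
Definition Lu (gam : R) (S : 'M[R]_d -> R) (u w : 'rV[R]_d -> R)
    (x : 'rV[R]_d) : R :=
  S (hess w x) - (gam - 1) * u x `^ (gam - 2) * w x.

Definition domain (Om : set 'rV[R]_d) : Prop := open Om /\ connected Om.

End Defs.

From HB Require Import structures.
From mathcomp Require Import all_boot all_order all_algebra.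
From mathcomp Require Import all_classical all_reals all_analysis.
From mathcomp Require Import ring lra.
Set Implicit Arguments. Unset Strict Implicit. Unset Printing Implicit Defensive.
Import Order.TTheory GRing.Theory Num.Theory.
Import numFieldNormedType.Exports.
Local Open Scope classical_set_scope.
Local Open Scope ring_scope.

(* Put th = gam - 1 and p = 1 / (2 - gam), so that the barrier is
   W = |x - x0|^beta = (|x - x0|^2)^p.  Its Hessian
   4p(p-1)|z|^(2p-4) z^T z + 2p|z|^(2p-2) I  (z = x - x0) is positive semidefinite
   with operator norm O(|z|^(2p-2)), so uniform ellipticity and the subdifferential
   inequality give S(D^2 W) <= C T^th with T = W(x), while S(D^2 u) >= F(D^2 u) - F(0)
   = u^th.  Hence L_u(a u - W) >= a (1 - th) u^th + th u^(th-1) T - C T^th, which is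
   nonnegative once a is large: if T <= K u the first term absorbs C T^th, otherwise
   the second one does.  Since S is only linear on symmetric matrices, D^2 u must be
   symmetric, which is Schwarz's theorem for C^2 functions. *)

Section LineDerivative.
Context {R : numFieldType} {V W : normedModType R}.
Implicit Types (f : V -> W) (a v : V) (t : R).

Let line_quotient f a v t :
  (fun h : R => h^-1 *: (((fun s : R => f (a + s *: v)) \o shift t) (h *: 1)
                         - f (a + t *: v)))
  = (fun h => h^-1 *: ((f \o shift (a + t *: v)) (h *: v) - f (a + t *: v))).
Proof.
by apply/funext => h; rewrite /shift /= [h *: 1]mulr1 scalerDl addrCA addrA.
Qed.

Lemma derivable_line f a v t :
  derivable f (a + t *: v) v <-> derivable (fun s : R => f (a + s *: v)) t 1.
Proof. by rewrite /derivable line_quotient. Qed.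

Lemma derive_line f a v t :
  'D_v f (a + t *: v) = 'D_1 (fun s : R => f (a + s *: v)) t.
Proof. by rewrite /derive line_quotient. Qed.

Lemma is_derive_lineP f a v t df :
  is_derive (a + t *: v) v f df <-> is_derive t 1 (fun s : R => f (a + s *: v)) df.
Proof.
split=> -[fv <-]; split; rewrite ?derive_line //.
- by rewrite -derivable_line.
- by rewrite derivable_line.
Qed.

Lemma is_derive_line0P f a v df :
  is_derive a v f df <-> is_derive (0 : R) 1 (fun s : R => f (a + s *: v)) df.
Proof. by rewrite -is_derive_lineP scale0r addr0. Qed.

Lemma derive_translate f c v z :
  'D_v (fun y => f (y + c)) z = 'D_v f (z + c).
Proof. by rewrite /derive /shift /=; under eq_fun do rewrite -addrA. Qed.

Lemma derivable_translate f c v z :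
  derivable (fun y => f (y + c)) z v <-> derivable f (z + c) v.
Proof. by rewrite /derivable /shift /=; under eq_fun do rewrite -addrA. Qed.

End LineDerivative.

Section Schwarz.
Context {R : realType} {V : normedModType R}.
Implicit Types (f : V -> R) (x a p q v : V).

Lemma mvt_line f a v h : 0 <= h ->
  (forall t, 0 <= t <= h -> derivable f (a + t *: v) v) ->
  exists2 t, 0 <= t <= h & f (a + h *: v) - f a = h * 'D_v f (a + t *: v).
Proof.
move=> h0 fv.
have fv' t : t \in `[0, h] -> is_derive t 1 (fun s : R => f (a + s *: v)) ('D_v f (a + t *: v)).
  by rewrite in_itv => /fv /derivableP /is_derive_lineP.
have cont : {within `[0, h], continuous (fun s : R => f (a + s *: v))}.
  by apply: derivable_within_continuous => t /fv' [].
have [t t0h] := MVT_segment h0 (fun t t0h => fv' t (subset_itv_oo_cc t0h)) cont.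
rewrite scale0r addr0 subr0 mulrC => ->.
by exists t; rewrite -?in_itv.
Qed.

Lemma second_difference_mvt f x p q h : 0 <= h ->
  (forall t s, 0 <= t <= h -> 0 <= s <= h ->
     differentiable f (x + t *: p + s *: q) /\
     differentiable ('D_p f) (x + t *: p + s *: q)) ->
  exists t s, [/\ 0 <= t <= h, 0 <= s <= h &
    f (x + h *: p + h *: q) - f (x + h *: p) - f (x + h *: q) + f x
      = h * h * 'D_q ('D_p f) (x + t *: p + s *: q)].
Proof.
move=> h0 fd.
have hh : 0 <= h <= h by apply/andP.
have h00 : (0 : R) <= 0 <= h by apply/andP.
have fqp t : 0 <= t <= h -> derivable (fun y => f (y + h *: q)) (x + t *: p) p.
  by move=> th; rewrite derivable_translate; exact: diff_derivable (fd t h th hh).1.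
have fp t : 0 <= t <= h -> derivable f (x + t *: p) p.
  by move=> th; apply: diff_derivable; have [] := fd t 0 th h00; rewrite scale0r addr0.
have [t th Et] := mvt_line h0 (fun t th => derivableB (fqp t th) (fp t th)).
have [s sh Es] := mvt_line h0 (fun s sh => diff_derivable (fd t s th sh).2).
rewrite (deriveB (fqp t th) (fp t th)) derive_translate Es in Et.
have Et' : f (x + h *: p + h *: q) - f (x + h *: p) - (f (x + h *: q) - f x)
    = h * (h * 'D_q ('D_p f) (x + t *: p + s *: q)) := Et.
by exists t, s; split => //; rewrite -mulrA -Et'; lra.
Qed.

Lemma derive_comm f x p q :
  (\forall y \near x, [/\ differentiable f y, differentiable ('D_p f) y
                        & differentiable ('D_q f) y]) ->
  {for x, continuous ('D_q ('D_p f))} -> {for x, continuous ('D_p ('D_q f))} ->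
  'D_q ('D_p f) x = 'D_p ('D_q f) x.
Proof.
move=> fd cpq cqp.
apply/eqP; rewrite -subr_eq0 -normr_le0; apply/ler_addgt0Pr => e e0.
have e2 : 0 < e / 2 by rewrite divr_gt0.
have [r r0 near_x] := (nbhs_ballP _ _).1 (filterI fd (filterI
  (@cvgr_dist_lt _ _ _ _ (nbhs_filter x) _ _ cpq _ e2)
  (@cvgr_dist_lt _ _ _ _ (nbhs_filter x) _ _ cqp _ e2))).
pose h := r / (`|p| + `|q| + 1).
have h0 : 0 < h by rewrite divr_gt0 // ltr_wpDl ?addr_ge0.
have in_ball t s : 0 <= t <= h -> 0 <= s <= h -> ball x r (x + t *: p + s *: q).
  move=> /andP[t0 th] /andP[s0 sh]; rewrite -ball_normE /= -addrA opprD addNKr normrN.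
  rewrite (le_lt_trans (ler_normD _ _)) // !normrZ !ger0_norm //.
  apply: (@le_lt_trans _ _ (h * (`|p| + `|q|))); first by rewrite mulrDr lerD // ler_wpM2r.
  by rewrite /h mulrAC ltr_pdivrMr ?ltr_pM2l ?ltrDl // ltr_wpDl ?addr_ge0.
have in_ball' t s : 0 <= t <= h -> 0 <= s <= h -> ball x r (x + t *: q + s *: p).
  by move=> th sh; rewrite addrAC; exact: in_ball.
(* The same second difference yields both mixed derivatives at nearby points. *)
have [t1 [s1 [t1h s1h E1]]] := second_difference_mvt (ltW h0)
  (fun t s th sh => let: conj (And3 a b _) _ := near_x _ (in_ball t s th sh) in conj a b).
have [t2 [s2 [t2h s2h E2]]] := second_difference_mvt (p := q) (q := p) (ltW h0)
  (fun t s th sh => let: conj (And3 a _ c) _ := near_x _ (in_ball' t s th sh) in conj a c).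
have [_ [c1 _]] := near_x _ (in_ball t1 s1 t1h s1h).
have [_ [_ c2]] := near_x _ (in_ball' t2 s2 t2h s2h).
set Q1 := 'D_q ('D_p f) _ in E1 c1; set Q2 := 'D_p ('D_q f) _ in E2 c2.
rewrite [x + h *: q + h *: p]addrAC [_ - f (x + h *: q) - _]addrAC E1 in E2.
have EQ : Q1 = Q2 := mulfI (mulf_neq0 (lt0r_neq0 h0) (lt0r_neq0 h0)) E2.
set A := 'D_q ('D_p f) x in c1 *; set B := 'D_p ('D_q f) x in c2 *.
have -> : A - B = (A - Q1) + (Q2 - B) by rewrite EQ addrA subrK.
rewrite distrC in c2; rewrite add0r (splitr e).
exact: le_trans (ler_normD _ _) (lerD (ltW c1) (ltW c2)).
Qed.
End Schwarz.

Section RealDerivativeAt0.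
Context {R : realType}.
Implicit Types (f g : R -> R) (a b c p q L : R).

Lemma is_derive0_quotient f g L :
  (forall h, h != 0 -> h^-1 * (f h - f 0) = g h) -> g x @[x --> 0^'] --> L ->
  is_derive (0 : R) 1 f L.
Proof.
move=> fg gL.
have qL : (fun h : R => h^-1 *: ((f \o shift 0) (h *: 1) - f 0)) x @[x --> 0^'] --> L.
  apply: cvg_trans gL; apply: near_eq_cvg; near=> h.
  rewrite /shift /= addr0 [h *: 1]mulr1; symmetry; apply: fg.
  by near: h; exact: nbhs_dnbhs_neq.
by split; [apply/cvg_ex; exists L | exact: cvg_lim].
Unshelve. all: by end_near.
Qed.

Lemma is_derive0_vanishing f g :
  (forall h, f h = h * g h) -> g x @[x --> 0^'] --> 0 -> is_derive (0 : R) 1 f 0.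
Proof.
move=> fE; apply: is_derive0_quotient => h h0.
by rewrite !fE mul0r subr0 mulKf.
Qed.

Lemma sqr_powR_cvg0 q : 0 < q -> (h ^+ 2) `^ q @[h --> (0 : R)^'] --> 0.
Proof.
move=> q0; apply: cvg_comp (powR_cvg0 q0).
have sqr0 : h ^+ 2 @[h --> (0 : R)] --> 0.
  by rewrite -[X in _ --> X](mulr0 0) -expr2; exact: exprn_continuous.
move=> P /= /sqr0 /nbhs_dnbhs; apply: filter_app; near=> h => /= Ph.
by apply: Ph; rewrite exprn_even_gt0 //; near: h; exact: nbhs_dnbhs_neq.
Unshelve. all: by end_near.
Qed.

Lemma is_derive0_quadratic c b :
  is_derive (0 : R) 1 (fun t => c + 2 * b * t + t ^+ 2) (2 * b).
Proof.
apply: (@is_derive0_quotient _ (fun h => 2 * b + h)) => [h h0|].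
  by rewrite expr2; field.
rewrite -[X in _ --> X]addr0; apply: cvg_within_filter.
by apply: cvgD; [exact: cvg_cst | exact: cvg_id].
Qed.

Lemma is_derive0_linear a b :
  is_derive (0 : R) 1 (fun t => a + t * b) b.
Proof.
apply: (@is_derive0_quotient _ (fun => b)) => [h h0|]; first by field.
exact: cvg_cst.
Qed.

Lemma sqr_le0_eq0 b : b ^+ 2 <= 0 -> b = 0.
Proof. by move=> b0; apply/eqP; rewrite -sqrf_eq0 eq_le b0 sqr_ge0. Qed.

Lemma is_derive0_powR_quadratic_gt0 c b p : 0 < c ->
  is_derive (0 : R) 1 (fun t => (c + 2 * b * t + t ^+ 2) `^ p)
    (2 * p * c `^ (p - 1) * b).
Proof.
move=> c0.
have pw : is_derive (c + 2 * b * 0 + 0 ^+ 2) 1 (fun x : R => x `^ p) (p * c `^ (p - 1)).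
  by rewrite mulr0 addr0 expr0n addr0; exact: is_derive1_powR.
have := is_derive1_comp (g := fun t => c + 2 * b * t + t ^+ 2) pw (is_derive0_quadratic c b).
by move/is_derive_eq; apply; ring.
Qed.

Lemma is_derive0_powR_quadratic c b p : 0 <= c -> b ^+ 2 <= c -> 1 < p ->
  is_derive (0 : R) 1 (fun t => (c + 2 * b * t + t ^+ 2) `^ p)
    (2 * p * c `^ (p - 1) * b).
Proof.
move=> c0 bc p1; have [c_gt0|c_le0] := ltrP 0 c; first exact: is_derive0_powR_quadratic_gt0.
(* At c = 0 the chain rule fails, but the function is (t^2)^p, flat at 0 as p > 1. *)
have c_eq0 : c = 0 by apply/eqP; rewrite eq_le c_le0 c0.
subst c; have -> := sqr_le0_eq0 bc; rewrite [2 * p * _ * 0]mulr0.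
apply: (@is_derive0_vanishing _ (fun h => h * (h ^+ 2) `^ (p - 1))) => [h|].
  by rewrite mulrA -expr2 mulr_powRB1 ?sqr_ge0 ?(lt_trans ltr01 p1) // mulr0 mul0r !add0r.
rewrite -[X in _ --> X](mulr0 0); apply: cvgM; first exact: cvg_within_filter cvg_id.
by apply: sqr_powR_cvg0; rewrite subr_gt0.
Qed.

Lemma is_derive0_powR_quadraticM c a b k q :
  0 <= c -> a ^+ 2 <= c -> b ^+ 2 <= c -> 0 < q ->
  is_derive (0 : R) 1 (fun t => (c + 2 * b * t + t ^+ 2) `^ q * (a + t * k))
    (2 * q * c `^ (q - 1) * b * a + c `^ q * k).
Proof.
move=> c0 ac bc q0; have [c_gt0|c_le0] := ltrP 0 c.
  apply: is_derive_eq (is_deriveM (is_derive0_powR_quadratic_gt0 b q c_gt0)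
                                  (is_derive0_linear a k)) _.
  by rewrite /GRing.scale /= mulr0 mul0r !addr0 expr0n addr0; ring.
have c_eq0 : c = 0 by apply/eqP; rewrite eq_le c_le0 c0.
subst c; have -> := sqr_le0_eq0 ac; have -> := sqr_le0_eq0 bc.
rewrite (_ : _ + _ * k = 0); last by rewrite !mulr0 add0r powR0 ?mul0r // gt_eqF.
apply: (@is_derive0_vanishing _ (fun h => (h ^+ 2) `^ q * k)) => [h|].
  by rewrite mulr0 mul0r !add0r mulrCA.
rewrite -[X in _ --> X](mul0r k); apply: cvgM; first exact: sqr_powR_cvg0.
exact: cvg_cst.
Qed.
End RealDerivativeAt0.

Section SquaredNorm.
Context {R : realType} {d : nat}.
Implicit Types (z : 'rV[R]_d) (t : R).

Definition sqnorm z : R := \sum_(k < d) z 0 k ^+ 2.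

Lemma sqnorm_ge0 z : 0 <= sqnorm z.
Proof. by apply: sumr_ge0 => k _; exact: sqr_ge0. Qed.

Lemma sqr_coord_le_sqnorm z i : z 0 i ^+ 2 <= sqnorm z.
Proof. by rewrite /sqnorm (bigD1 i) //= lerDl; apply: sumr_ge0 => k _; exact: sqr_ge0. Qed.

Lemma coord_line z i j t : (z + t *: evec R i) 0 j = z 0 j + t * (j == i)%:R.
Proof. by rewrite /evec !mxE eqxx. Qed.

Lemma sqnorm_line z i t :
  sqnorm (z + t *: evec R i) = sqnorm z + 2 * z 0 i * t + t ^+ 2.
Proof.
rewrite /sqnorm (bigD1 i) //= [in RHS](bigD1 i) //= coord_line eqxx.
under eq_bigr => k ki do rewrite coord_line (negbTE ki) mulr0 addr0.
rewrite mulr1; ring.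
Qed.

Lemma enorm_sqr z : enorm z ^+ 2 = sqnorm z.
Proof. by rewrite sqr_sqrtr // sqnorm_ge0. Qed.

Lemma enorm_powR z b : enorm z `^ b = sqnorm z `^ (b / 2).
Proof. by rewrite /enorm -powR12_sqrt ?sqnorm_ge0 // -powRrM mulrC. Qed.

End SquaredNorm.

Section SquaredDistancePower.
Context {R : realType} {d : nat} (x0 : 'rV[R]_d) (p : R).
Hypothesis p_gt1 : 1 < p.
Implicit Types (x y : 'rV[R]_d).

Definition sqdist_powR y := sqnorm (y - x0) `^ p.

Lemma sqdist_powR_line y i :
  (fun t => sqdist_powR (y + t *: evec R i))
  = (fun t => (sqnorm (y - x0) + 2 * (y - x0) 0 i * t + t ^+ 2) `^ p).
Proof. by apply/funext => t; rewrite /sqdist_powR addrAC sqnorm_line. Qed.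

Lemma is_derive_sqdist_powR y i : is_derive y (evec R i) sqdist_powR
  (2 * p * sqnorm (y - x0) `^ (p - 1) * (y - x0) 0 i).
Proof.
apply/is_derive_line0P; rewrite sqdist_powR_line.
exact: is_derive0_powR_quadratic (sqnorm_ge0 _) (sqr_coord_le_sqnorm _ _) p_gt1.
Qed.

Lemma derive_sqdist_powR i : 'D_(evec R i) sqdist_powR
  = fun y => 2 * p * sqnorm (y - x0) `^ (p - 1) * (y - x0) 0 i.
Proof. by apply/funext => y; have [_ ->] := is_derive_sqdist_powR y i. Qed.

Lemma is_derive2_sqdist_powR y i j :
  is_derive y (evec R j) ('D_(evec R i) sqdist_powR)
    (2 * p * (2 * (p - 1) * sqnorm (y - x0) `^ (p - 1 - 1) * (y - x0) 0 j * (y - x0) 0 i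
              + sqnorm (y - x0) `^ (p - 1) * (i == j)%:R)).
Proof.
rewrite derive_sqdist_powR; apply/is_derive_line0P.
have -> : (fun t => 2 * p * sqnorm (y + t *: evec R j - x0) `^ (p - 1)
                      * (y + t *: evec R j - x0) 0 i)
  = (2 * p) *: (fun t => (sqnorm (y - x0) + 2 * (y - x0) 0 j * t + t ^+ 2) `^ (p - 1)
                          * ((y - x0) 0 i + t * (i == j)%:R)).
  by apply/funext => t; rewrite addrAC sqnorm_line coord_line /= -mulrA.
have p1_gt0 : 0 < p - 1 by rewrite subr_gt0.
apply: is_derive_eq (is_deriveZ (2 * p) (is_derive0_powR_quadraticM (i == j)%:R
  (sqnorm_ge0 _) (sqr_coord_le_sqnorm _ i) (sqr_coord_le_sqnorm _ j) p1_gt0)) _.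
by rewrite /GRing.scale /=; ring.
Qed.

Lemma hess_sqdist_powR x : hess sqdist_powR x =
  (4 * p * (p - 1) * sqnorm (x - x0) `^ (p - 1 - 1)) *: ((x - x0)^T *m (x - x0))
  + (2 * p * sqnorm (x - x0) `^ (p - 1)) *: 1%:M.
Proof.
apply/matrixP => i j; rewrite !mxE; have [_ ->] := is_derive2_sqdist_powR x i j.
rewrite big_ord1 !mxE; ring.
Qed.

End SquaredDistancePower.

Section SymmetricMatrices.
Context {R : realType} {d : nat}.
Implicit Types (A B : 'M[R]_d) (v z : 'rV[R]_d).

Lemma symm0 : symm (0 : 'M[R]_d).
Proof. by rewrite /symm trmx0. Qed.

Lemma symm1 : symm (1%:M : 'M[R]_d).
Proof. by rewrite /symm tr_scalar_mx. Qed.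

Lemma symmD A B : symm A -> symm B -> symm (A + B).
Proof. by rewrite /symm => hA hB; rewrite linearD /= hA hB. Qed.

Lemma symmZ k A : symm A -> symm (k *: A).
Proof. by rewrite /symm => hA; rewrite linearZ /= hA. Qed.

Lemma symmN A : symm A -> symm (- A).
Proof. by rewrite /symm => hA; rewrite linearN /= hA. Qed.

Lemma symm_gram z : symm (z^T *m z).
Proof. by rewrite /symm trmx_mul trmxK. Qed.

Lemma dotmxE v z : (v *m z^T) 0 0 = \sum_k v 0 k * z 0 k.
Proof. by rewrite mxE; apply: eq_bigr => k _; rewrite mxE. Qed.

Lemma mulmx_gram v z : v *m (z^T *m z) = (v *m z^T) 0 0 *: z.
Proof. by rewrite mulmxA {1}(mx11_scalar (v *m z^T)) mul_scalar_mx. Qed.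

Lemma psd1 : psd (1%:M : 'M[R]_d).
Proof.
split; first exact: symm1.
by move=> v; rewrite mulmx1 dotmxE; apply: sumr_ge0 => k _; rewrite -expr2 sqr_ge0.
Qed.

Lemma psd_gram z : psd (z^T *m z).
Proof.
split=> [|v]; first exact: symm_gram.
rewrite mulmx_gram -scalemxAl mxE.
have -> : (z *m v^T) 0 0 = (v *m z^T) 0 0.
  by rewrite !dotmxE; apply: eq_bigr => k _; rewrite mulrC.
by rewrite -expr2 sqr_ge0.
Qed.

End SymmetricMatrices.

Section OperatorNorm.
Context {R : realType} {d : nat}.
Implicit Types (P : 'M[R]_d) (v z : 'rV[R]_d).

Lemma sum_mul_sqr_le (a b : 'I_d -> R) :
  (\sum_k a k * b k) ^+ 2 <= (\sum_k a k ^+ 2) * (\sum_k b k ^+ 2).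
Proof.
rewrite -(@ler_pM2l _ 2) // expr2 !big_distrlr /= mulr_sumr.
have -> : 2 * (\sum_i \sum_j a i ^+ 2 * b j ^+ 2)
    = \sum_i \sum_j (a i ^+ 2 * b j ^+ 2 + a j ^+ 2 * b i ^+ 2).
  rewrite mulr2n mulrDl mul1r [X in _ + X]exchange_big -big_split /=.
  by apply: eq_bigr => i _; rewrite -big_split.
apply: ler_sum => i _; rewrite mulr_sumr; apply: ler_sum => j _.
rewrite -subr_ge0 (_ : _ - _ = (a i * b j - a j * b i) ^+ 2) ?sqr_ge0 //; ring.
Qed.

Lemma dotmx_le_enorm v z : `|(v *m z^T) 0 0| <= enorm v * enorm z.
Proof.
rewrite dotmxE -sqrtr_sqr /enorm -sqrtrM ?sqnorm_ge0 // ler_sqrt.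
  exact: sum_mul_sqr_le.
by rewrite mulr_ge0 ?sqnorm_ge0.
Qed.

Lemma enormZ k z : enorm (k *: z) = `|k| * enorm z.
Proof.
rewrite /enorm (eq_bigr (fun i => k ^+ 2 * z 0 i ^+ 2)) => [|i _]; last by rewrite mxE exprMn.
by rewrite -mulr_sumr sqrtrM ?sqr_ge0 // sqrtr_sqr.
Qed.

Lemma opnorm_le P c : (forall v, enorm v <= 1 -> enorm (v *m P) <= c) -> opnorm P <= c.
Proof.
move=> Pc; apply: ge_sup; last by move=> _ [v v1 <-]; exact: Pc.
by exists (enorm (0 *m P)), 0 => //=; rewrite /enorm big1 ?sqrtr0 // => i _; rewrite mxE expr0n.
Qed.

Lemma opnorm1_le1 : opnorm (1%:M : 'M[R]_d) <= 1.
Proof. by apply: opnorm_le => v; rewrite mulmx1. Qed.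

Lemma opnorm_gram z : opnorm (z^T *m z) <= sqnorm z.
Proof.
apply: opnorm_le => v v1; rewrite mulmx_gram enormZ -enorm_sqr expr2.
rewrite ler_wpM2r ?sqrtr_ge0 // (le_trans (dotmx_le_enorm v z)) //.
by rewrite ler_piMl ?sqrtr_ge0.
Qed.

End OperatorNorm.

Section Hessian.
Context {R : realType} {d : nat}.
Implicit Types (Om : set 'rV[R]_d) (u w : 'rV[R]_d -> R) (x : 'rV[R]_d).

Lemma symm_hess Om u x : open Om -> C2_on Om u -> Om x -> symm (hess u x).
Proof.
move=> Om_open uC2 Ox; apply/matrixP => i j; rewrite !mxE.
have [_ [_ cont]] := uC2 x Ox.
apply: derive_comm (cont j i) (cont i j).
apply: filterS (open_nbhs_nbhs (conj Om_open Ox)) => y Oy.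
by have [u_d [Du_d _]] := uC2 y Oy; split.
Qed.

Lemma hess_scaleB Om u w (a : R) x : open Om -> Om x ->
  (forall y, Om y -> differentiable u y) ->
  (forall i, differentiable ('D_(evec R i) u) x) ->
  (forall y i, derivable w y (evec R i)) ->
  (forall i j, derivable ('D_(evec R i) w) x (evec R j)) ->
  hess (fun y => a * u y - w y) x = a *: hess u x - hess w x.
Proof.
move=> Om_open Ox ud Dud wd Dwd; apply/matrixP => i j; rewrite !mxE.
have Dlin (f g : 'rV[R]_d -> R) y v : derivable f y v -> derivable g y v ->
    'D_v (fun z => a * f z - g z) y = a * 'D_v f y - 'D_v g y.
  move=> fv gv; have -> : (fun z => a * f z - g z) = a \*: f - g by apply/funext.
  by rewrite (deriveB (derivableZ (k := a) fv) gv) deriveZ.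
have E : \forall y \near x, 'D_(evec R i) (fun y => a * u y - w y) y
    = a * 'D_(evec R i) u y - 'D_(evec R i) w y.
  apply: filterS (open_nbhs_nbhs (conj Om_open Ox)) => y Oy.
  exact: Dlin (diff_derivable (ud y Oy)) (wd y i).
by rewrite (near_eq_derive _ E) (Dlin _ _ _ _ (diff_derivable (Dud i)) (Dwd i j)).
Qed.

End Hessian.

Section Subdifferential.
Context {R : realType} {d : nat}.
Implicit Types (F S : 'M[R]_d -> R) (A M P : 'M[R]_d).

Lemma linear_on_sym0 S : linear_on_sym S -> S 0 = 0.
Proof.
by move=> Slin; have := Slin 1 0 0 symm0 symm0; rewrite scale1r addr0 mul1r; lra.
Qed.

Lemma linear_on_symZ S c M : linear_on_sym S -> symm M -> S (c *: M) = c * S M.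
Proof.
by move=> Slin sM; have := Slin c M 0 sM symm0; rewrite !addr0 linear_on_sym0 ?addr0.
Qed.

Lemma linear_on_symN S M : linear_on_sym S -> symm M -> S (- M) = - S M.
Proof. by move=> Slin sM; rewrite -scaleN1r linear_on_symZ // mulN1r. Qed.

Lemma linear_on_symB S c M N : linear_on_sym S -> symm M -> symm N ->
  S (c *: M - N) = c * S M - S N.
Proof.
by move=> Slin sM sN; rewrite Slin ?linear_on_symN //; exact: symmN.
Qed.

Lemma subdifferential_ge F S A : subdifferential F S A -> symm A -> F A - F 0 <= S A.
Proof.
move=> [Slin Ssub] sA; have := Ssub (- A) (symmN sA).
by rewrite addrN linear_on_symN // lerNl opprB.
Qed.

Lemma subdifferential_le_opnorm (Lam : R) F S A P : unif_elliptic Lam F ->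
  subdifferential F S A -> symm A -> psd P -> S P <= Lam * opnorm P.
Proof.
move=> Fell [_ Ssub] sA Ppsd.
exact: le_trans (Ssub P Ppsd.1) (Fell A P sA Ppsd).2.
Qed.

End Subdifferential.

Section ScalarInequality.
Context {R : realType}.
Implicit Types (C a U T th : R).

Lemma ler_powR2r (r x y : R) : 0 <= r -> 0 <= x -> x <= y -> x `^ r <= y `^ r.
Proof.
by move=> r0 x0 xy; apply: (ge0_ler_powR r0); rewrite ?nnegrE // (le_trans x0 xy).
Qed.

(* The ratio T / U beyond which th * U^(th-1) * T dominates C * T^th. *)
Definition balance_const C th : R := Num.max 1 ((C / th) `^ (1 - th)^-1).

Lemma balance_const_ge1 C th : 1 <= balance_const C th.
Proof. by rewrite le_max lexx. Qed.

Lemma balance_const_ge C th : 0 <= C -> 0 < th < 1 ->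
  C / th <= balance_const C th `^ (1 - th).
Proof.
move=> C0 /andP[th0 th1]; have th1' : 0 < 1 - th by rewrite subr_gt0.
have -> : C / th = ((C / th) `^ (1 - th)^-1) `^ (1 - th).
  by rewrite -powRrM mulVf ?gt_eqF // powRr1 // divr_ge0 // ltW.
by rewrite ler_powR2r ?powR_ge0 ?le_max ?lexx ?orbT // ltW.
Qed.

Lemma balance_threshold_ge0 C th : 0 <= C -> th < 1 ->
  0 <= C * balance_const C th / (1 - th).
Proof.
move=> C0 th1; rewrite divr_ge0 ?mulr_ge0 ?subr_ge0 ?(ltW th1) //.
exact: le_trans ler01 (balance_const_ge1 _ _).
Qed.

Lemma powR_absorb th C a U T : 0 < th < 1 -> 0 <= C -> 0 < U -> 0 <= T ->
  C * balance_const C th / (1 - th) <= a ->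
  C * T `^ th <= a * (1 - th) * U `^ th + th * U `^ (th - 1) * T.
Proof.
move=> th01 C0 U0 T0 ha; have /andP[th0 th1] := th01.
have th1' : 0 < 1 - th by rewrite subr_gt0.
set K := balance_const C th; have K1 : 1 <= K := balance_const_ge1 C th.
have K0 : 0 < K by exact: lt_le_trans ltr01 K1.
have CK : C * K <= a * (1 - th) by rewrite -ler_pdivrMr.
have a0 : 0 <= a := le_trans (balance_threshold_ge0 C0 th1) ha.
have first_ge0 : 0 <= a * (1 - th) * U `^ th by rewrite !mulr_ge0 ?powR_ge0 // ltW.
have second_ge0 : 0 <= th * U `^ (th - 1) * T by rewrite !mulr_ge0 ?powR_ge0 // ltW.
have [TKU|KUT] := lerP T (K * U).
  have TU : T `^ th <= K * U `^ th.
    apply: le_trans (ler_powR2r (ltW th0) T0 TKU) _.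
    rewrite (powRM _ (ltW K0) (ltW U0)) ler_wpM2r ?powR_ge0 //.
    exact: ler1_powR K1 (ltW th1).
  have := ler_wpM2l C0 TU; have := ler_wpM2r (powR_ge0 U th) CK.
  rewrite mulrA; lra.
have T_gt0 : 0 < T by exact: lt_trans (mulr_gt0 K0 U0) KUT.
have KT : K `^ (1 - th) <= U `^ (th - 1) * T `^ (1 - th).
  have := ler_powR2r (ltW th1') (mulr_ge0 (ltW K0) (ltW U0)) (ltW KUT).
  rewrite (powRM _ (ltW K0) (ltW U0)) => /(ler_wpM2l (powR_ge0 U (th - 1))).
  rewrite mulrCA -powRD; last by rewrite (gt_eqF U0) implybT.
  by rewrite (_ : th - 1 + (1 - th) = 0) ?powRr0 ?mulr1 //; ring.
have TE : T `^ (1 - th) * T `^ th = T.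
  rewrite -powRD; last by rewrite (gt_eqF T_gt0) implybT.
  by rewrite (_ : 1 - th + th = 1) ?powRr1 //; ring.
have CT : C <= th * (U `^ (th - 1) * T `^ (1 - th)).
  by rewrite -ler_pdivrMl // mulrC (le_trans (balance_const_ge C0 th01) KT).
have := ler_wpM2r (powR_ge0 T th) CT.
rewrite -!mulrA TE; lra.
Qed.
End ScalarInequality.

Section LinearizedOperator.
Context {R : realType} {d : nat}.

Lemma symm_hess_sqdist_powR (x0 : 'rV[R]_d) (p : R) x : 1 < p ->
  symm (hess (sqdist_powR x0 p) x).
Proof.
by move=> p1; rewrite hess_sqdist_powR //; apply: symmD; apply: symmZ;
  [exact: symm_gram | exact: symm1].
Qed.

Lemma subdifferential_hess_sqdist_powR_le (Lam p : R) (F S : 'M[R]_d -> R) A x0 x :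
  0 <= Lam -> 1 < p -> unif_elliptic Lam F -> subdifferential F S A -> symm A ->
  S (hess (sqdist_powR x0 p) x)
    <= Lam * (4 * p * (p - 1) + 2 * p) * sqnorm (x - x0) `^ (p - 1).
Proof.
move=> Lam0 p1 Fell Ssub sA; have Slin := Ssub.1.
have p0 : 0 < p by exact: lt_trans ltr01 p1.
have p1' : 0 < p - 1 by rewrite subr_gt0.
set c := sqnorm (x - x0); have c0 : 0 <= c := sqnorm_ge0 _.
have [sG s1] := (symm_gram (x - x0), @symm1 R d).
rewrite hess_sqdist_powR // -/c Slin ?linear_on_symZ //; last exact: symmZ.
have Sgram : S ((x - x0)^T *m (x - x0)) <= Lam * c.
  apply: le_trans (subdifferential_le_opnorm Fell Ssub sA (psd_gram _)) _.
  by rewrite ler_wpM2l // opnorm_gram.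
have S1 : S 1%:M <= Lam.
  apply: le_trans (subdifferential_le_opnorm Fell Ssub sA psd1) _.
  by rewrite ler_piMr // opnorm1_le1.
have k1 : 0 <= 4 * p * (p - 1) * c `^ (p - 1 - 1) by rewrite !mulr_ge0 ?powR_ge0 // ltW.
have k2 : 0 <= 2 * p * c `^ (p - 1) by rewrite !mulr_ge0 ?powR_ge0 // ltW.
apply: le_trans (lerD (ler_wpM2l k1 Sgram) (ler_wpM2l k2 S1)) _.
rewrite -(mulr_powRB1 c0 p1'); lra.
Qed.

Lemma linearized_lower_bound (th C a U T SH SW : R) : 0 < th < 1 -> 0 <= C -> 0 < U -> 0 <= T ->
  C * balance_const C th / (1 - th) <= a ->
  U `^ th <= SH -> SW <= C * T `^ th ->
  0 <= a * SH - SW - th * U `^ (th - 1) * (a * U - T).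
Proof.
move=> th01 C0 U0 T0 ha USH SWC; have /andP[th0 th1] := th01.
have a0 : 0 <= a := le_trans (balance_threshold_ge0 C0 th1) ha.
have E : th * U `^ (th - 1) * (a * U - T) = a * th * U `^ th - th * U `^ (th - 1) * T.
  by rewrite -(mulr_powRB1 (ltW U0) th0); ring.
have := powR_absorb th01 C0 U0 T0 ha; have := ler_wpM2l a0 USH.
rewrite E; lra.
Qed.

End LinearizedOperator.

Theorem lemma2p9 (R : realType) (d : nat) (Lam gam : R) :
  (1 <= d)%N -> 1 <= Lam -> 1 < gam < 2 ->
  exists a0 : R, 0 < a0 /\
  forall (F : 'M[R]_d -> R), standing_assumptions Lam F ->
  forall (Om : set 'rV[R]_d) (u : 'rV[R]_d -> R) (x0 : 'rV[R]_d) (a : R),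
    domain Om -> SF gam F Om u -> a0 <= a ->
    forall x, Om x -> 0 < u x ->
    forall S, subdifferential F S (hess u x) ->
      0 <= Lu gam S u
             (fun y => a * u y - enorm (y - x0) `^ (2 / (2 - gam))) x.
Proof.
move=> _ Lam1 /andP[gam1 gam2]; have gam2' : 0 < 2 - gam by lra.
pose th := gam - 1; pose p := (2 - gam)^-1.
have p1 : 1 < p by rewrite /p invf_gt1; lra.
have th01 : 0 < th < 1 by apply/andP; split; rewrite /th; lra.
pose C := Lam * (4 * p * (p - 1) + 2 * p).
have C0 : 0 < C by rewrite mulr_gt0 ?addr_gt0 ?mulr_gt0 //; lra.
exists (C * balance_const C th / (1 - th)); split.
  apply: divr_gt0; last by rewrite subr_gt0 (andP th01).2.
  exact: mulr_gt0 C0 (lt_le_trans ltr01 (balance_const_ge1 _ _)).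
move=> F [Fell [_ [F0 _]] _] Om u x0 a [Om_open _] [uC2 uF] ha x Ox ux S Ssub.
have Wy y : enorm (y - x0) `^ (2 / (2 - gam)) = sqdist_powR x0 p y.
  by rewrite enorm_powR mulrAC divff ?mul1r.
have sH := symm_hess Om_open uC2 Ox.
have sW := symm_hess_sqdist_powR x0 x p1.
rewrite /Lu Wy (_ : (fun y => _) = (fun y => a * u y - sqdist_powR x0 p y)); last first.
  by apply/funext => y; rewrite Wy.
rewrite (hess_scaleB _ Om_open Ox (fun y Oy => (uC2 y Oy).1) (uC2 x Ox).2.1);
  last 2 first.
- by move=> y i; case: (is_derive_sqdist_powR x0 p1 y i).
- by move=> i j; case: (is_derive2_sqdist_powR x0 p1 x i j).
rewrite linear_on_symB //; last exact: Ssub.1.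
rewrite (_ : gam - 2 = th - 1); last by rewrite /th; ring.
apply: (linearized_lower_bound th01 (ltW C0) ux (powR_ge0 _ _) ha).
  by have := subdifferential_ge Ssub sH; rewrite (uF x Ox).2 F0 subr0.
rewrite /sqdist_powR -powRrM (_ : p * th = p - 1); last by rewrite /p /th; field; exact: lt0r_neq0.
exact: subdifferential_hess_sqdist_powR_le (le_trans ler01 Lam1) p1 Fell Ssub sH.
Qed.
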